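(* Let $\mathcal{S}$ be a finite set with $N_{\mathcal{S}} = |\mathcal{S}| \ge 2$ elements, and let $\mathcal{X}$ be an input space with a probability distribution $p$, where every $x \in \mathcal{X}$ has a unique correct output $s_x \in \mathcal{S}$ and $\mathcal{X} = \mathcal{X}^{\text{in}} \cup \mathcal{X}^{\text{out}}$ is a disjoint union. Consider an EnSolver $m$ built from $M$ base models $m_1,\dots,m_M$ with uncertainty threshold $\tau \in (0,1]$ such that $M(1-\tau)$ is a positive integer, satisfying the standing assumptions (independence and (A1)–(A3)) described in the context. Then $$\mathcal{E}(M, N_{\mathcal{S}}, \tau) > p\left( m(x) \notin \{ s_x, s_{\text{skip}} \} \,\middle|\, x \in \mathcal{X}^{\text{out}} \right).$$
   Context: Setting: $\mathcal{S}$ is a finite set of output strings with $N_{\mathcal{S}} = |\mathcal{S}| \ge 2$; inputs $x \in \mathcal{X}$ are drawn from a probability distribution $p$ on $\mathcal{X}$, each $x$ having a single correct output $s_x \in \mathcal{S}$. $\mathcal{X}$ is the disjoint union of the in-distribution set $\mathcal{X}^{\text{in}}$ and the out-of-distribution set $\mathcal{X}^{\text{out}}$, and $\alpha = p(x \in \mathcal{X}^{\text{in}})$. An ensemble consists of $M$ base models $m_1, \dots, m_M$, each of which produces a (random) prediction $m_i(x) \in \mathcal{S}$ on input $x$; probabilities are taken jointly over $x \sim p$ and the predictions, and the base models make their predictions independently of each other given the input (in particular conditionally on $x \in \mathcal{X}^{\text{in}}$ and conditionally on $x \in \mathcal{X}^{\text{out}}$). Let $\beta_i = p(m_i(x) =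 s_x \mid x \in \mathcal{X}^{\text{in}})$, $\beta_{\text{min}} = \min_i \beta_i$, $\beta_{\text{max}} = \max_i \beta_i$. Assumptions: (A1) $\beta_{\text{min}} > 1/N_{\mathcal{S}}$; (A2) for each $i$, conditionally on $x \in \mathcal{X}^{\text{in}}$, $m_i(x)$ equals each incorrect string $s \neq s_x$ with probability $(1-\beta_i)/(N_{\mathcal{S}}-1)$; (A3) for each $i$, conditionally on $x \in \mathcal{X}^{\text{out}}$, $m_i(x)$ equals each $s \in \mathcal{S}$ with probability $1/N_{\mathcal{S}}$. For $x$ and $s \in \mathcal{S}$, $n(x,s)$ is the number of base models with $m_i(x) = s$. The threshold $\tau \in (0,1]$ is such that $M(1-\tau)$ is a positive integer. The EnSolver $m$ acts as follows on input $x$: let $p_{\max} = \max_{s} n(x,s)/M$ and uncertainty $u = 1 - p_{\max}$; if $u < \tau$ it outputs a string $y$ maximizing $n(x,\cdot)$, otherwise it outputs a special skip symbol $s_{\text{skip}}$. The out-of-distribution error bound is $\mathcal{E}(M, N_{\mathcal{S}}, \tau) = \binom{M}{\lfloor M/2 \rfloor} (N_{\mathcal{S}})^{-M(1-\tau)}$. *)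

From HB Require Import structures.
From mathcomp Require Import all_boot all_order all_algebra.
From mathcomp Require Import all_classical all_reals all_analysis.

Set Implicit Arguments.
Unset Strict Implicit.
Unset Printing Implicit Defensive.

Import Order.TTheory GRing.Theory Num.Theory.
Local Open Scope classical_set_scope.
Local Open Scope ring_scope.

Definition condp d (T : measurableType d) (R : realType) (P : probability T R)
  (A B : set T) : R := fine (P (A `&` B)) / fine (P B).

Definition nvotes (S : finType) (M : nat) (preds : 'I_M -> S) (s : S) : nat :=
  #|[set i : 'I_M | preds i == s]|.

Definition maxvotes (S : finType) (M : nat) (preds : 'I_M -> S) : nat :=
  \max_(s : S) nvotes preds s.

(* The EnSolver: p_max = max_s n(x,s)/M, u = 1 - p_max; if u < tau output y
   (the selected string y, which must maximise n(x,.)), else skip.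
   The skip symbol s_skip is represented by None. *)
Definition ensolver (R : realType) (S : finType) (M : nat) (tau : R)
  (preds : 'I_M -> S) (y : S) : option S :=
  let pmax : R := (maxvotes preds)%:R / M%:R in
  if 1 - pmax < tau then Some y else None.

Definition ood_bound (R : realType) (M N : nat) (tau : R) : R :=
  'C(M, M./2)%:R * (N%:R) `^ (- (M%:R * (1 - tau))).

From HB Require Import structures.
From mathcomp Require Import all_boot all_order all_algebra.
From mathcomp Require Import all_classical all_reals all_analysis.
From mathcomp Require Import zify lra.
Import Order.TTheory GRing.Theory Num.Theory.

Set Implicit Arguments.
Unset Strict Implicit.
Unset Printing Implicit Defensive.

(** Out of distribution the M votes are independent and uniform on S, and the
EnSolver answers only when some string gets more than K = M(1 - tau) votes.
Hence a wrong non-skip answer has probability at most #L / N^M, where L is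
the set of such "landslide" vote profiles. A union bound over the winning
string s and over the (K+1)-sets of voters choosing s gives
#L <= N * 'C(M, K+1) * N^(M-K-1), and 'C(M, K+1) <= 'C(M, M/2). The
inequality is strict because the unanimous profile is counted 'C(M, K+1)
times by the union bound, or, when K+1 = M, because 'C(M, M/2) >= 2. *)

Lemma leq_bin_succ n k : k.*2 < n -> 'C(n, k) <= 'C(n, k.+1).
Proof. by move=> lt; rewrite -(@leq_pmul2l k.+1) // mul_bin_left leq_mul //; lia. Qed.

Lemma leq_bin_half n k : 'C(n, k) <= 'C(n, n./2).
Proof.
have n_eq := odd_double_half n.
wlog le_k_half : k / k <= n./2 => [wlog_le|].
  have [/wlog_le //|lt_half_k] := leqP k n./2.
  have [le_k_n|/bin_small->//] := leqP k n.
  by rewrite -bin_sub //; apply: wlog_le; lia.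
apply: (homo_leq_in (D := [pred i | i <= n./2]) (f := binomial n) (r := leq)) => //.
- exact: leq_trans.
- by move=> i j _ jD m /andP[_ /ltnW /leq_trans]; apply.
- by move=> i _; rewrite inE => lt; apply: leq_bin_succ; lia.
- by rewrite inE.
Qed.

Lemma bin_half_gt1 n : 1 < n -> 1 < 'C(n, n./2).
Proof. by move=> n_gt1; apply: leq_trans (leq_bin_half n 1); rewrite bin1. Qed.

Section VoteCounting.
Variable S : finType.
Local Notation N := #|S|.

Lemma card_ffun_const_on (I : finType) (T : {set I}) (s : S) :
  #|[set f : {ffun I -> S} | T \subset [set i | f i == s]]| = N ^ (#|I| - #|T|).
Proof.
pose A i : {set S} := if i \in T then [set s] else [set: S]%SET.
transitivity #|setXn A|.
  apply: eq_card => f; rewrite !inE; apply/fintype.subsetP/forallP => [fT i|fA i iT].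
    by rewrite /finfun.fmem /A; case: ifP => [/fT|]; rewrite !inE.
  by have := fA i; rewrite /finfun.fmem /A iT !inE.
rewrite cardsXn (eq_bigr (fun i => if i \in ~: T then N else 1)); last first.
  by move=> i _; rewrite /A inE; case: ifP; rewrite ?cards1 ?cardsT.
by rewrite -big_mkcond prod_nat_const -(cardsC T) addKn.
Qed.

Variable M : nat.
Local Notation profile := {ffun 'I_M -> S}.

Lemma nvotesE (f : 'I_M -> S) s : nvotes f s = #|[set i | f i == s]|.
Proof. by apply: eq_card => i; rewrite inE; apply/idP/idP; rewrite in_setE. Qed.

Lemma nvotes_le (f : 'I_M -> S) s : nvotes f s <= M.
Proof. by apply: leq_trans (max_card _) _; rewrite card_ord. Qed.

Lemma sum_card_const_on (s : S) k :
  \sum_(T : {set 'I_M} | #|T| == k) #|[set f : profile | T \subset [set i | f i == s]]|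
  = \sum_(f : profile) 'C(nvotes f s, k).
Proof.
transitivity (\sum_(T : {set 'I_M} | #|T| == k)
                \sum_(f : profile | T \subset [set i | f i == s]) 1).
  by apply: eq_bigr => T _; rewrite -sum1_card; apply: eq_bigl => f; rewrite inE.
rewrite (exchange_big_dep xpredT) //=; apply: eq_bigr => f _.
by rewrite nvotesE -(cards_draws _ k) -sum1_card; apply: eq_bigl => T; rewrite !inE andbC.
Qed.

(* Counting pairs (T, f) with #|T| = k and f constant equal to s on T; the
   unanimous profile alone contributes 'C(M, k) pairs, hence the extra term. *)
Lemma card_votes_ge (s : S) k : 0 < k <= M ->
  #|[set f : profile | k <= nvotes f s]| + ('C(M, k)).-1 <= 'C(M, k) * N ^ (M - k).
Proof.
case/andP=> k_gt0 le_k_M; set L := [set f : profile | k <= nvotes f s].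
have -> : 'C(M, k) * N ^ (M - k) = \sum_(f : profile) 'C(nvotes f s, k).
  rewrite -sum_card_const_on (eq_bigr (fun _ => N ^ (M - k))) => [|T /eqP <-].
    rewrite sum_nat_const -[in 'C(M, k)](card_ord M) -card_draws.
    by congr (_ * _); apply: eq_card => T; rewrite inE.
  by have := card_ffun_const_on T s; rewrite card_ord.
pose c : profile := [ffun=> s].
have nvotes_c : nvotes c s = M.
  by rewrite nvotesE -[RHS]card_ord; apply: eq_card => i; rewrite !inE ffunE eqxx.
have L_c : c \in L by rewrite inE nvotes_c.
rewrite (bigID (mem L)) /=; apply: leq_trans (leq_addr _ _).
rewrite (eq_bigr (fun f : profile => 1 + ('C(nvotes f s, k)).-1)) => [|f]; last first.
  by rewrite inE -bin_gt0 add1n => /prednK.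
by rewrite big_split /= sum1_card leq_add2l (bigD1 c) //= nvotes_c leq_addr.
Qed.

Definition landslide K := [set f : profile | [exists s, K < nvotes f s]].

Lemma card_landslide_le K :
  #|landslide K| <= \sum_(s : S) #|[set f : profile | K < nvotes f s]|.
Proof.
rewrite -[leqLHS]sum1_card.
rewrite (eq_bigr (fun s => \sum_(f in [set f : profile | K < nvotes f s]) 1)) => [|s _].
  2: by rewrite sum1_card.
rewrite (exchange_big_dep predT) //= [leqLHS]big_mkcond; apply: leq_sum => f _.
by case: ifPn => // /[!inE] /existsP[s Ks]; rewrite (bigD1 s) ?inE.
Qed.

Lemma card_landslide_lt K : 0 < K -> 1 < N ->
  #|landslide K| * N ^ K < 'C(M, M./2) * N ^ M.
Proof.
move=> K_gt0 N_gt1; have N_gt0 : 0 < N := ltnW N_gt1.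
have half_le : M./2 <= M by rewrite leq_half_double -addnn; lia.
have [le_M_K | lt_K_M] := leqP M K.
  have -> : #|landslide K| = 0.
    apply: eq_card0 => f; rewrite inE; apply/existsP => -[s].
    by rewrite ltnNge (leq_trans (nvotes_le f s) le_M_K).
  by rewrite mul0n muln_gt0 bin_gt0 half_le expn_gt0 N_gt0.
set C := 'C(M, K.+1).
have union_bound : #|landslide K| + N * C.-1 <= N * (C * N ^ (M - K.+1)).
  apply: leq_trans (leq_add (card_landslide_le K) (leqnn _)) _.
  rewrite -!sum_nat_const -big_split /=; apply: leq_sum => s _.
  by apply: card_votes_ge; rewrite ltn0Sn.
have powN : N ^ M = N * N ^ (M - K.+1) * N ^ K.
  by rewrite -expnS -expnD; congr (_ ^ _); lia.
have weighted : #|landslide K| * N ^ K + (N * N ^ K) * C.-1 <= C * N ^ M.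
  by move: (leq_mul union_bound (leqnn (N ^ K))); rewrite powN; lia.
have C_le := leq_bin_half M K.+1.
have C_mid := bin_half_gt1 (leq_ltn_trans K_gt0 lt_K_M).
have : 0 < N * N ^ K by rewrite muln_gt0 expn_gt0 N_gt0.
have : 0 < N ^ M by rewrite expn_gt0 N_gt0.
nia.
Qed.

End VoteCounting.

Lemma landslide_uniform_lt (R : numFieldType) (S : finType) (M K : nat) :
  (0 < K)%N -> (1 < #|S|)%N ->
  (#|landslide S M K|%:R * (#|S|%:R^-1) ^+ M < 'C(M, M./2)%:R * #|S|%:R ^- K :> R)%R.
Proof.
move=> K_gt0 N_gt1; have N_gt0 : (0 < #|S|%:R :> R)%R by rewrite ltr0n ltnW.
rewrite exprVn ltr_pdivrMr ?exprn_gt0 // mulrAC ltr_pdivlMr ?exprn_gt0 //.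
by rewrite -!natrX -!natrM ltr_nat card_landslide_lt.
Qed.

Local Open Scope classical_set_scope.
Local Open Scope ring_scope.

Section ConditionalProbability.
Context (R : realType) (d : measure_display) (Omega : measurableType d).
Variable P : probability Omega R.

Lemma le_condp (A A' B : set Omega) : measurable A -> measurable A' -> measurable B ->
  A `<=` A' -> condp P A B <= condp P A' B.
Proof.
move=> mA mA' mB sAA'; rewrite /condp ler_wpM2r ?invr_ge0 ?fine_ge0 //.
have mAB := measurableI _ _ mA mB; have mA'B := measurableI _ _ mA' mB.
apply: fine_le; rewrite ?fin_num_measure //.
by apply: le_measure; rewrite ?inE //; exact: setSI.
Qed.

Lemma condpU_le (A A' B : set Omega) : measurable A -> measurable A' -> measurable B ->
  condp P (A `|` A') B <= condp P A B + condp P A' B.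
Proof.
move=> mA mA' mB; rewrite /condp -mulrDl ler_wpM2r ?invr_ge0 ?fine_ge0 // setIUl.
have mAB := measurableI _ _ mA mB; have mA'B := measurableI _ _ mA' mB.
rewrite -fineD ?fin_num_measure //.
apply: fine_le; rewrite ?fin_numD ?fin_num_measure //; first exact: measurableU.
exact: measureU2.
Qed.

Lemma condp_bigsetU_le (I : Type) (r : seq I) (F : I -> set Omega) (B : set Omega) :
  (forall i, measurable (F i)) -> measurable B ->
  condp P (\big[setU/set0]_(i <- r) F i) B <= \sum_(i <- r) condp P (F i) B.
Proof.
move=> mF mB; elim: r => [|i r IH]; first by rewrite !big_nil /condp set0I measure0 mul0r.
rewrite !big_cons; apply: le_trans (condpU_le (mF i) _ mB) _; last by rewrite lerD2l.
exact: bigsetU_measurable.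
Qed.

End ConditionalProbability.

Section Fibers.
Context (d : measure_display) (Omega : measurableType d).

Lemma measurable_fin_preimage (T : finType) (h : Omega -> T) (Q : set T) :
  (forall t, measurable (h @^-1` [set t])) -> measurable (h @^-1` Q).
Proof.
move=> mh; have -> : h @^-1` Q = \bigcup_(t in Q) h @^-1` [set t].
  apply/seteqP; split => [w Qhw|w [t Qt ht]] /=; [by exists (h w)|by rewrite ht].
exact: fin_bigcup_measurable finite_finset _.
Qed.

Lemma measurable_pair_fibers (T1 T2 : Type) (h1 : Omega -> T1) (h2 : Omega -> T2) :
  (forall t, measurable (h1 @^-1` [set t])) -> (forall t, measurable (h2 @^-1` [set t])) ->
  forall t, measurable ((fun w => (h1 w, h2 w)) @^-1` [set t]).
Proof.
move=> mh1 mh2 [t1 t2].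
have -> : (fun w => (h1 w, h2 w)) @^-1` [set (t1, t2)]
          = h1 @^-1` [set t1] `&` h2 @^-1` [set t2].
  by apply/seteqP; split => w /= => [[-> ->]|[-> ->]].
exact: measurableI.
Qed.

End Fibers.

Section VoteProfiles.
Context (d : measure_display) (Omega : measurableType d).
Variables (S : finType) (M : nat) (preds : 'I_M -> Omega -> S).

Definition profile w : {ffun 'I_M -> S} := [ffun i => preds i w].

Lemma profileE w : profile w = (fun i => preds i w) :> ('I_M -> S).
Proof. by apply/funext => i; rewrite ffunE. Qed.

Lemma profile_fiber f :
  profile @^-1` [set f] = \bigcap_(i in [set: 'I_M]) [set w | preds i w = f i].
Proof.
apply/seteqP; split => w /=; first by move=> <- i _; rewrite ffunE.
by move=> pw; apply/ffunP => i; rewrite ffunE; exact: pw.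
Qed.

Lemma measurable_profile_fiber :
  (forall i s, measurable [set w | preds i w = s]) ->
  forall f, measurable (profile @^-1` [set f]).
Proof.
move=> mpreds f; rewrite profile_fiber.
by apply: fin_bigcap_measurable => [|i _]; [exact: finite_finset|exact: mpreds].
Qed.

End VoteProfiles.

Lemma ensolver_answers_landslide (R : realType) (S : finType) (M K : nat) (tau : R)
    (preds : 'I_M -> S) (y : S) :
  (0 < M)%N -> M%:R * (1 - tau) = K%:R ->
  ensolver tau preds y <> None -> (K < maxvotes preds)%N.
Proof.
move=> M_gt0 MK; rewrite /ensolver; case: ltP => // lt_tau _.
by rewrite -(ltr_nat R) -MK mulrC -ltr_pdivlMr ?ltr0n //; lra.
Qed.

Theorem lemma1
  (R : realType) (d : measure_display) (Omega : measurableType d)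
  (P : probability Omega R)
  (S : finType) (X : Type) (Xin : set X) (correct : X -> S)
  (x : Omega -> X) (M : nat) (preds : 'I_M -> Omega -> S)
  (sel : Omega -> S) (tau : R) (K : nat)
  (* N_S >= 2 *)
  (hN : (2 <= #|S|)%N)
  (* tau in (0,1], M(1 - tau) = K a positive integer *)
  (htau0 : 0 < tau) (htau1 : tau <= 1)
  (hK : (0 < K)%N) (hMK : M%:R * (1 - tau) = K%:R)
  (* measurability of the relevant events *)
  (mXin : measurable [set w | Xin (x w)])
  (mcorr : forall s : S, measurable [set w | correct (x w) = s])
  (mpred : forall (i : 'I_M) (s : S), measurable [set w | preds i w = s])
  (msel : forall s : S, measurable [set w | sel w = s])
  (* both parts of X have positive probability (so the conditionals exist) *)
  (hin_pos : (0 < P [set w | Xin (x w)])%E)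
  (hout_pos : (0 < P [set w | ~ Xin (x w)])%E)
  (* the EnSolver outputs a string maximizing n(x, .) *)
  (hsel : forall (w : Omega) (s : S),
      (nvotes (fun i => preds i w) s <= nvotes (fun i => preds i w) (sel w))%N)
  (* independence of the base models conditionally on X^in and on X^out *)
  (hind_in : forall f : {ffun 'I_M -> S},
      condp P (\bigcap_(i in [set: 'I_M]) [set w | preds i w = f i])
              [set w | Xin (x w)]
      = \prod_(i < M) condp P [set w | preds i w = f i] [set w | Xin (x w)])
  (hind_out : forall f : {ffun 'I_M -> S},
      condp P (\bigcap_(i in [set: 'I_M]) [set w | preds i w = f i])
              [set w | ~ Xin (x w)]
      = \prod_(i < M) condp P [set w | preds i w = f i] [set w | ~ Xin (x w)])
  (* (A1) *)
  (hA1 : forall i : 'I_M,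
      condp P [set w | preds i w = correct (x w)] [set w | Xin (x w)]
      > 1 / (#|S|)%:R)
  (* (A2): conditionally on X^in and on s being incorrect, m_i(x) = s with
     probability (1 - beta_i) / (N_S - 1) *)
  (hA2 : forall (i : 'I_M) (s : S),
      condp P [set w | preds i w = s /\ correct (x w) <> s] [set w | Xin (x w)]
      = condp P [set w | correct (x w) <> s] [set w | Xin (x w)]
        * ((1 - condp P [set w | preds i w = correct (x w)] [set w | Xin (x w)])
           / ((#|S|)%:R - 1)))
  (* (A3) *)
  (hA3 : forall (i : 'I_M) (s : S),
      condp P [set w | preds i w = s] [set w | ~ Xin (x w)] = 1 / (#|S|)%:R) :
  ood_bound M #|S| tau >
  condp P
    [set w | ensolver tau (fun i => preds i w) (sel w) <> Some (correct (x w)) /\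
             ensolver tau (fun i => preds i w) (sel w) <> None]
    [set w | ~ Xin (x w)].
Proof.
have M_gt0 : (0 < M)%N.
  rewrite lt0n; apply/negP => /eqP M0; move: hMK; rewrite M0 mul0r => /esym/eqP.
  by rewrite pnatr_eq0 => /eqP K0; rewrite K0 in hK.
set out := [set w | ~ Xin (x w)]; have mout : measurable out := measurableC mXin.
have mfiber := measurable_profile_fiber mpred.
set E := [set w | _ /\ _].
have mE : measurable E.
  pose Q (t : {ffun 'I_M -> S} * S * S) :=
    ensolver tau t.1.1 t.1.2 <> Some t.2 /\ ensolver tau t.1.1 t.1.2 <> None.
  have -> : E = (fun w => (profile preds w, sel w, correct (x w))) @^-1` Q.
    by apply/seteqP; split => w; rewrite /= /Q /= profileE.
  apply/measurable_fin_preimage/measurable_pair_fibers => //.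
  exact: measurable_pair_fibers.
have E_landslide :
    E `<=` \big[setU/set0]_(f <- enum (landslide S M K)) profile preds @^-1` [set f].
  move=> w [_ answers]; rewrite -bigcup_seq; exists (profile preds w) => //.
  rewrite /= mem_enum inE; apply/existsP; exists (sel w); rewrite profileE.
  apply: leq_trans (ensolver_answers_landslide M_gt0 hMK answers) _.
  by apply/bigmax_leqP => s _; exact: hsel.
have condp_fiber f : condp P (profile preds @^-1` [set f]) out = (#|S|%:R^-1) ^+ M.
  rewrite profile_fiber hind_out (eq_bigr _ (fun i _ => hA3 i (f i))).
  by rewrite prodr_const card_ord mul1r.
apply: le_lt_trans (le_condp P mE _ mout E_landslide) _; first exact: bigsetU_measurable.
apply: le_lt_trans (condp_bigsetU_le P _ _ mout) _ => //.
rewrite (eq_bigr _ (fun f _ => condp_fiber f)) big_enum sumr_const.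
rewrite -[X in X < _]mulr_natl.
by rewrite /ood_bound hMK powR_invn ?ler0n //; exact: landslide_uniform_lt.
Qed.
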